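(* Let $p$ be a prime, $X$ a countable set, and let $K,L\subseteq\mathbb{Q}_p(X)$ be $\tau$-closed sub-$\mathbb{Z}_p$-modules. Then: (a) $K=K^{\perp\perp}$; (b) if $K\subseteq L$ then $L^\perp\subseteq K^\perp$; (c) $(K+L)^\perp=K^\perp\cap L^\perp$; (d) $(K\cap L)^\perp$ equals the $\tau$-closure of $K^\perp+L^\perp$.
   Context: $\mathbb{Q}_p(X)$ is the set of maps $\xi:X\to\mathbb{Q}_p$ with $|\xi(i)|_p\le1$ for all but finitely many $i$, a $\mathbb{Z}_p$-module under coordinatewise operations, with the topology $\tau$ in which $A\subseteq\mathbb{Q}_p(X)$ is open iff for every finite $P\subseteq X$ the set $A\cap\big(\prod_{i\in P}\mathbb{Q}_p\times\prod_{j\in X\setminus P}\mathbb{Z}_p\big)$ is open in the product topology. The pairing is $\langle\xi,\eta\rangle=\iota\big(\sum_{i\in X}(\xi(i)\eta(i)+\mathbb{Z}_p)\big)\in S^1$, where $\iota:\mathbb{Q}_p/\mathbb{Z}_p\cong\mathbb{Z}[1/p]/\mathbb{Z}\hookrightarrow\mathbb{R}/\mathbb{Z}\cong S^1$ is the canonical embedding. For $K\subseteq\mathbb{Q}_p(X)$, $K^\perp=\{\xi\in\mathbb{Q}_p(X):\langle\xi,\eta\rangle=1\ \forall\eta\in K\}$ (the neutral element of $S^1$; written $0$ when $S^1\cong\mathbb{R}/\mathbb{Z}$). *)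

From HB Require Import structures.
From mathcomp Require Import all_boot all_order all_algebra.
From mathcomp Require Import boolp classical_sets functions cardinality fsbigop.
Set Implicit Arguments. Unset Strict Implicit. Unset Printing Implicit Defensive.
Import Order.TTheory GRing.Theory Num.Theory.
Local Open Scope classical_set_scope.
Local Open Scope ring_scope.

(* The p-adic numbers Q_p, realised as the inverse limit                     *)
(*     Q_p  =  lim_n  Q_p / p^n Z_p  =  lim_n  Z[1/p] / p^n Z .              *)
(* An element x of Q_p is represented by the sequence n |-> (x mod p^n Z_p), *)
(* each residue given by its canonical representative in [0, p^n) /\ Z[1/p].*)
(* Hence representation is unique, and equality of p-adic numbers is        *)
(* (extensional) equality of sequences.                                     *)

Definition qp_raw := nat -> rat.

Definition rmod (q m : rat) : rat := q - (Num.floor (q / m))%:~R * m.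

Definition is_qp (p : nat) (x : qp_raw) : Prop :=
  forall n : nat,
    [/\ exists k : nat, (p ^ k)%:R * x n \is a Num.int,
        0 <= x n, x n < (p ^ n)%:R
      & (x n.+1 - x n) / (p ^ n)%:R \is a Num.int].

Definition qp0 : qp_raw := fun _ => 0.
Definition qp_add (p : nat) (x y : qp_raw) : qp_raw :=
  fun n => rmod (x n + y n) (p ^ n)%:R.

(* multiplication: x*y mod p^n is computed from x_m*y_m for m large enough,
   namely m = n + d + e where p^d, p^e bound the denominators of x and y. *)
Definition qp_mul (p : nat) (x y : qp_raw) : qp_raw :=
  fun n => let m := (n + `|denq (x 0%N)| + `|denq (y 0%N)|)%N in
           rmod (x m * y m) (p ^ n)%:R.

(* |x|_p <= 1, i.e. x \in Z_p: the residue mod Z_p vanishes *)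
Definition in_Zp (p : nat) (x : qp_raw) : Prop := is_qp p x /\ x 0%N = 0.

Definition QpX (p : nat) (X : Type) : set (X -> qp_raw) :=
  [set xi | (forall i, is_qp p (xi i)) /\ finite_set [set i | ~ in_Zp p (xi i)]].

Definition vadd (p : nat) (X : Type) (xi eta : X -> qp_raw) : X -> qp_raw :=
  fun i => qp_add p (xi i) (eta i).
Definition vscale (p : nat) (X : Type) (a : qp_raw) (xi : X -> qp_raw) : X -> qp_raw :=
  fun i => qp_mul p a (xi i).
Definition vzero (X : Type) : X -> qp_raw := fun _ => qp0.

Definition is_Zp_submodule (p : nat) (X : Type) (K : set (X -> qp_raw)) : Prop :=
  [/\ K `<=` @QpX p X, K (@vzero X),
      (forall xi eta, K xi -> K eta -> K (vadd p xi eta))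
    & (forall a xi, in_Zp p a -> K xi -> K (vscale p a xi))].

Definition msum (p : nat) (X : Type) (K L : set (X -> qp_raw)) : set (X -> qp_raw) :=
  [set z | exists xi eta, [/\ K xi, L eta & z = vadd p xi eta]].

(* prod_{i in P} Q_p  x  prod_{j notin P} Z_p, as a subset of Q_p(X) *)
Definition Ybox (p : nat) (X : eqType) (P : seq X) : set (X -> qp_raw) :=
  [set xi | (forall i, is_qp p (xi i)) /\ (forall j, j \notin P -> xi j 0%N = 0)].

(* B is open in the product topology of Ybox P (relative to Ybox P):
   every point of B has a basic product neighbourhood, constraining finitely
   many coordinates F, each to a ball x + p^n Z_p, contained in B. *)
Definition box_open (p : nat) (X : eqType) (P : seq X) (B : set (X -> qp_raw)) : Prop :=
  forall xi, Ybox p P xi -> B xi ->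
    exists (F : seq X) (n : nat),
      forall eta, Ybox p P eta -> (forall i, i \in F -> eta i n = xi i n) -> B eta.

Definition tau_open (p : nat) (X : eqType) (A : set (X -> qp_raw)) : Prop :=
  A `<=` @QpX p X /\ forall P : seq X, box_open p P (A `&` Ybox p P).

Definition tau_closed (p : nat) (X : eqType) (C : set (X -> qp_raw)) : Prop :=
  C `<=` @QpX p X /\ tau_open p (@QpX p X `\` C).

Definition tau_closure (p : nat) (X : eqType) (S : set (X -> qp_raw)) : set (X -> qp_raw) :=
  [set xi | @QpX p X xi /\
     forall C, tau_closed p C -> S `<=` C -> C xi].

(* The pairing, with values in Q_p/Z_p = Z[1/p]/Z  inside R/Z,               *)
(* represented by the canonical representative in [0,1).                     *)
(* The residue of x mod Z_p is x 0.                                          *)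

Definition pairing (p : nat) (X : choiceType) (xi eta : X -> qp_raw) : rat :=
  rmod (\sum_(i \in [set: X]) (qp_mul p (xi i) (eta i) 0%N)) 1.

Definition perp (p : nat) (X : choiceType) (K : set (X -> qp_raw)) : set (X -> qp_raw) :=
  [set xi | @QpX p X xi /\ forall eta, K eta -> pairing p xi eta = 0].

(** The four statements reduce to a separation theorem: if [xi] lies outside the
    τ-closure of an additive submonoid [S] of Q_p(X), some [eta] annihilates [S]
    but not [xi].  A basic τ-neighbourhood of [xi] missing [S] constrains finitely
    many coordinates F up to precision p^n; modulo it, [S] becomes a subgroup H of
    the countable torsion group ⊕_j Q_p / p^(n_j) Z_p (n_j = n on F, 0 elsewhere)
    which does not contain the image of [xi].  Since Q/Z is divisible, a character
    of the group generated by H and [xi], trivial on H but not on [xi], extends one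
    generator p^-t e_j at a time to the whole group, and its values on these
    generators are the digits of [eta].  Given separation, (a) and (d) follow from
    the usual double-annihilator argument, as annihilators are τ-closed and the
    pairing is bi-additive. *)

From HB Require Import structures.
From mathcomp Require Import all_boot all_order all_algebra.
From mathcomp Require Import boolp classical_sets functions cardinality fsbigop.
From mathcomp Require Import zify ring lra.

Set Implicit Arguments. Unset Strict Implicit. Unset Printing Implicit Defensive.
Import Order.TTheory GRing.Theory Num.Theory.
Local Open Scope classical_set_scope.
Local Open Scope ring_scope.

(** * Congruences modulo a rational number *)

Definition cong (R : archiNumFieldType) (m u v : R) := (u - v) / m \is a Num.int.

Section Congruence.
Variable R : archiNumFieldType.
Implicit Types m u v w : R.

Lemma cong_refl m u : cong m u u.
Proof. by rewrite /cong subrr mul0r. Qed.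

Lemma cong_sym m u v : cong m u v -> cong m v u.
Proof. by rewrite /cong -opprB mulNr rpredN. Qed.

Lemma cong_trans m u v w : cong m u v -> cong m v w -> cong m u w.
Proof. by move=> huv hvw; have := rpredD huv hvw; rewrite -mulrDl addrA subrK. Qed.

Lemma congD m u v u' v' : cong m u v -> cong m u' v' -> cong m (u + u') (v + v').
Proof. by move=> h h'; rewrite /cong opprD addrACA mulrDl rpredD. Qed.

Lemma congMl m u v c : c \is a Num.int -> cong m u v -> cong m (c * u) (c * v).
Proof. by move=> hc h; rewrite /cong -mulrBr -mulrA rpredM. Qed.

Lemma cong_sum (I : Type) (r : seq I) m (f g : I -> R) :
  (forall i, cong m (f i) (g i)) -> cong m (\sum_(i <- r) f i) (\sum_(i <- r) g i).
Proof. by move=> h; rewrite /cong -sumrB mulr_suml rpred_sum // => i _; apply: h. Qed.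

Lemma cong1E u v : cong 1 u v = (u - v \is a Num.int).
Proof. by rewrite /cong invr1 mulr1. Qed.

Lemma cong_dvd m d u v : d \is a Num.int -> d != 0 -> cong (d * m) u v -> cong m u v.
Proof.
move=> dZ d0 h; have [->|m0] := eqVneq m 0; first by rewrite /cong invr0 mulr0.
rewrite /cong (_ : (u - v) / m = (u - v) / (d * m) * d); first exact: rpredM.
by field; rewrite d0 m0.
Qed.

End Congruence.

Lemma cong_eq (R : archiRealFieldType) (m u v : R) :
  0 <= u < m -> 0 <= v < m -> cong m u v -> u = v.
Proof.
move=> /andP[u0 um] /andP[v0 vm] h; apply/eqP; rewrite -subr_eq0; apply: contraT => uv.
have m0 : 0 < m by apply: le_lt_trans um.
have := norm_intr_ge1 h; rewrite mulf_neq0 // ?invr_eq0 ?gt_eqF // => /(_ isT).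
rewrite normrM normfV (gtr0_norm m0) ler_pdivlMr // mul1r.
have : `|u - v| < m by rewrite ltr_distlC; apply/andP; split; lra.
lra.
Qed.

Section Residue.
Implicit Types m q a : rat.

Lemma rmod_cong m q : m != 0 -> cong m q (rmod q m).
Proof.
move=> m0; rewrite /cong /rmod (_ : _ / m = (Num.floor (q / m))%:~R) ?intr_int //.
by field.
Qed.

Lemma rmod_itv m q : 0 < m -> 0 <= rmod q m < m.
Proof.
move=> m0; rewrite /rmod subr_ge0 -ler_pdivlMr // floor_le /=.
have := floorD1_gt (q / m); rewrite ltr_pdivrMr // intrD mulrDl mul1r; lra.
Qed.

Lemma rmod_unique m q a : 0 <= a < m -> cong m q a -> rmod q m = a.
Proof.
move=> am h; have m0 : 0 < m by case/andP: am => a0 /(le_lt_trans a0).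
apply: cong_eq (rmod_itv _ m0) am _.
exact: cong_trans (cong_sym (rmod_cong _ (lt0r_neq0 m0))) h.
Qed.

Lemma rmod_eq m q q' : 0 < m -> cong m q q' -> rmod q m = rmod q' m.
Proof.
move=> m0 h; apply: rmod_unique (rmod_itv _ m0) _.
exact: cong_trans h (rmod_cong _ (lt0r_neq0 m0)).
Qed.

End Residue.

Lemma denq_dvd (q : rat) (d : int) : q * d%:~R \is a Num.int -> (denq q %| d)%Z.
Proof.
move=> /intrP[z hz].
have e : numq q * d = z * denq q.
  by apply/eqP; rewrite -(eqr_int rat) !intrM numqE -hz; apply/eqP; ring.
have : (denq q %| numq q * d)%Z by rewrite e dvdz_mull.
by rewrite Gauss_dvdzr // coprimez_sym; exact: coprime_num_den.
Qed.

(** * p-adic digits *)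

Section PadicDigits.
Variable p : nat.
Hypothesis p_prime : prime p.
Local Notation P k := ((p ^ k)%:R : rat).
Implicit Types x y z : qp_raw.

Lemma ppow_gt0 k : 0 < P k.
Proof. by rewrite ltr0n expn_gt0 prime_gt0. Qed.

Lemma ppow_neq0 k : P k != 0.
Proof. by rewrite gt_eqF ?ppow_gt0. Qed.

Lemma ppowD k l : P (k + l) = P k * P l.
Proof. by rewrite expnD natrM. Qed.

Lemma cong_ppow_le k l u v : (k <= l)%N -> cong (P l) u v -> cong (P k) u v.
Proof.
move=> kl; rewrite -(subnK kl) ppowD; apply: cong_dvd; [exact: natr_int | exact: ppow_neq0].
Qed.

Lemma qp_itv x k : is_qp p x -> 0 <= x k < P k.
Proof. by case/(_ k) => _ -> ->. Qed.

Lemma qp_chain x k l : is_qp p x -> (k <= l)%N -> cong (P k) (x l) (x k).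
Proof.
move=> hx; elim: l => [|l IH]; first by rewrite leqn0 => /eqP ->; exact: cong_refl.
rewrite leq_eqVlt => /orP[/eqP <-|]; first exact: cong_refl.
rewrite ltnS => kl; apply: cong_trans (IH kl).
by apply: (cong_ppow_le kl); case: (hx l).
Qed.

Lemma in_Zp_int x k : in_Zp p x -> x k \is a Num.int.
Proof. by case=> hx x0; have := qp_chain hx (leq0n k); rewrite x0 cong1E subr0. Qed.

(** The digits of [x] differ from [x 0] by integers, so the denominator of
    [x 0] (a power of [p]) clears all of them. *)
Definition qp_den x : nat := `|denq (x 0%N)|%N.

Lemma qp_den_gt0 x : (0 < qp_den x)%N.
Proof. by rewrite absz_gt0 denq_neq0. Qed.

Lemma qp_den_mul_int x k : is_qp p x -> (qp_den x)%:R * x k \is a Num.int.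
Proof.
move=> hx; rewrite -[x k](subrK (x 0%N)) mulrDr rpredD //.
  by rewrite rpredM ?natr_int // -cong1E; exact: (qp_chain hx (leq0n k)).
by rewrite /qp_den natr_absz gtr0_norm ?denq_gt0 // mulrC -numqE intr_int.
Qed.

Lemma qp_den_pow x : is_qp p x -> exists e, qp_den x = (p ^ e)%N.
Proof.
case/(_ 0%N) => -[k hk] _ _ _.
have /denq_dvd : x 0%N * (p ^ k)%N%:~R \is a Num.int by rewrite mulrC.
by rewrite /qp_den dvdzE absz_nat => /(dvdn_pfactor _ _ p_prime)[e _ ->]; exists e.
Qed.

Lemma qp_den_div_int x k : is_qp p x -> (qp_den x <= k)%N -> P k / (qp_den x)%:R \is a Num.int.
Proof.
move=> hx hk; have [e he] := qp_den_pow hx.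
have ek : (e <= k)%N.
  by apply: leq_trans hk; rewrite he ltnW // ltn_expl // prime_gt1.
by rewrite he -(subnK ek) ppowD mulfK ?ppow_neq0 ?natr_int.
Qed.

Lemma qp_digit_mul_int x b k l :
  is_qp p x -> (qp_den x <= k)%N -> b / P k \is a Num.int -> x l * b \is a Num.int.
Proof.
move=> hx hk hb; have d0 : (qp_den x)%:R != 0 :> rat by rewrite pnatr_eq0 -lt0n qp_den_gt0.
rewrite (_ : x l * b = (qp_den x)%:R * x l * (b / P k) * (P k / (qp_den x)%:R)).
  by rewrite rpredM ?qp_den_div_int // rpredM ?qp_den_mul_int.
by field; rewrite d0 ppow_neq0.
Qed.

Lemma is_qp0 : is_qp p qp0.
Proof.
by move=> k; rewrite /qp0 subrr mul0r ppow_gt0 lexx; split=> //; exists 0%N; rewrite mulr0.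
Qed.

Lemma qp_add_cong x y k : cong (P k) (qp_add p x y k) (x k + y k).
Proof. exact/cong_sym/rmod_cong/ppow_neq0. Qed.

Lemma qp_addC x y : qp_add p x y = qp_add p y x.
Proof. by apply/funext => k; rewrite /qp_add addrC. Qed.

Lemma qp_addA x y z : qp_add p x (qp_add p y z) = qp_add p (qp_add p x y) z.
Proof.
apply/funext => k; apply: (rmod_eq (ppow_gt0 k)); rewrite -/(qp_add p y z k) -/(qp_add p x y k).
apply: cong_trans (congD (cong_refl _ _) (qp_add_cong y z k)) _; rewrite addrA.
exact/congD/cong_refl/cong_sym/qp_add_cong.
Qed.

Lemma qp_addr0 x : is_qp p x -> qp_add p x qp0 = x.
Proof.
move=> hx; apply/funext => k; rewrite /qp_add /qp0 addr0.
by apply: rmod_unique; [exact: qp_itv | exact: cong_refl].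
Qed.

Lemma is_qp_add x y : is_qp p x -> is_qp p y -> is_qp p (qp_add p x y).
Proof.
move=> hx hy k; have [[a ha] _ _ hxS] := hx k; have [[b hb] _ _ hyS] := hy k.
split; last 1 first.
- apply: cong_trans (cong_ppow_le (leqnSn k) (qp_add_cong x y k.+1)) _.
  exact: cong_trans (congD hxS hyS) (cong_sym (qp_add_cong x y k)).
- exists (a + b)%N; have := qp_add_cong x y k; rewrite /cong => h.
  rewrite (_ : _ * _ = P b * (P a * x k) + P a * (P b * y k)
                        + P (a + b) * ((qp_add p x y k - (x k + y k)) / P k) * P k).
    have Pint n : P n \is a Num.int := natr_int _ _.
    exact: rpredD (rpredD (rpredM (Pint b) ha) (rpredM (Pint a) hb))
                  (rpredM (rpredM (Pint _) h) (Pint k)).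
  by rewrite !ppowD; field; rewrite ppow_neq0.
- by case/andP: (rmod_itv (x k + y k) (ppow_gt0 k)).
- by case/andP: (rmod_itv (x k + y k) (ppow_gt0 k)).
Qed.

Lemma in_Zp_add x y : in_Zp p x -> in_Zp p y -> in_Zp p (qp_add p x y).
Proof.
case=> hx x0 [hy y0]; split; first exact: is_qp_add.
by rewrite /qp_add x0 y0 addr0; apply: rmod_unique; [rewrite lexx ltr01 | exact: cong_refl].
Qed.

Lemma qp_mul0_cong x y k : is_qp p x -> is_qp p y -> (qp_den x + qp_den y <= k)%N ->
  cong 1 (qp_mul p x y 0) (x k * y k).
Proof.
move=> hx hy hk; rewrite /qp_mul add0n expn0 -/(qp_den x) -/(qp_den y).
set m := (qp_den x + qp_den y)%N in hk *.
apply: cong_trans (cong_sym (rmod_cong _ (oner_neq0 _))) _; apply: cong_sym.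
rewrite cong1E (_ : _ - _ = x k * (y k - y m) + y m * (x k - x m)); last by ring.
by rewrite rpredD // (qp_digit_mul_int (k := m)) ?leq_addr ?leq_addl //; exact: qp_chain.
Qed.

Lemma qp_mul0_itv x y : 0 <= qp_mul p x y 0 < 1.
Proof. exact: rmod_itv ltr01. Qed.

Lemma qp_mul0C x y : qp_mul p x y 0 = qp_mul p y x 0.
Proof. by rewrite /qp_mul addnAC mulrC. Qed.

Lemma qp_mul0_Zp x y : in_Zp p x -> in_Zp p y -> qp_mul p x y 0 = 0.
Proof.
move=> zx zy; apply: rmod_unique; first by rewrite lexx ltr01.
by rewrite cong1E subr0 rpredM ?in_Zp_int.
Qed.

Lemma qp_mul0D x y z : is_qp p x -> is_qp p y -> is_qp p z ->
  cong 1 (qp_mul p x (qp_add p y z) 0) (qp_mul p x y 0 + qp_mul p x z 0).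
Proof.
move=> hx hy hz; have hyz := is_qp_add hy hz.
set k := (qp_den x + qp_den y + qp_den z + qp_den (qp_add p y z))%N.
have /(qp_mul0_cong hx hyz) cyz : (qp_den x + qp_den (qp_add p y z) <= k)%N by rewrite /k; lia.
have /(qp_mul0_cong hx hy) cy : (qp_den x + qp_den y <= k)%N by rewrite /k; lia.
have /(qp_mul0_cong hx hz) cz : (qp_den x + qp_den z <= k)%N by rewrite /k; lia.
apply: cong_trans cyz (cong_trans _ (cong_sym (congD cy cz))).
rewrite cong1E -mulrDr -mulrBr (qp_digit_mul_int (k := k)) //; first by rewrite /k; lia.
exact: qp_add_cong.
Qed.

Lemma qp_mul0_local x x' y N : is_qp p x -> is_qp p x' -> is_qp p y ->
  (qp_den y <= N)%N -> x' N = x N -> qp_mul p x' y 0 = qp_mul p x y 0.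
Proof.
move=> hx hx' hy hN e; set k := (N + qp_den x + qp_den x' + qp_den y)%N.
have /(qp_mul0_cong hx' hy) c' : (qp_den x' + qp_den y <= k)%N by rewrite /k; lia.
have /(qp_mul0_cong hx hy) c : (qp_den x + qp_den y <= k)%N by rewrite /k; lia.
apply: cong_eq (qp_mul0_itv _ _) (qp_mul0_itv _ _) (cong_trans c' (cong_trans _ (cong_sym c))).
rewrite cong1E -mulrBl mulrC (_ : x' k - x k = (x' k - x' N) - (x k - x N)); last first.
  by rewrite e; ring.
rewrite (qp_digit_mul_int (k := N)) // mulrBl.
by apply: rpredB; apply: qp_chain => //; rewrite /k; lia.
Qed.

End PadicDigits.

(** * The module Q_p(X) and the pairing *)

Section Pairing.
Variable p : nat.
Hypothesis p_prime : prime p.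
Variable X : choiceType.
Local Notation QpX := (@QpX p X).
Implicit Types (z w : X -> qp_raw) (s : seq X) (S T : set (X -> qp_raw)).

Definition integral_off z s := forall i, i \notin s -> in_Zp p (z i).

Lemma QpX_integral_off z : QpX z -> exists s, integral_off z s.
Proof.
case=> _ /finite_seqP[s hs]; exists s => i; apply: contraNP => zi.
by have : [set i | ~ in_Zp p (z i)] i by []; rewrite hs.
Qed.

Lemma integral_off_catl z s s' : integral_off z s -> integral_off z (s ++ s').
Proof. by move=> h i; rewrite mem_cat negb_or => /andP[/h]. Qed.

Lemma integral_off_catr z s s' : integral_off z s' -> integral_off z (s ++ s').
Proof. by move=> h i; rewrite mem_cat negb_or => /andP[_ /h]. Qed.

Lemma QpX_is_qp z i : QpX z -> is_qp p (z i).
Proof. by case. Qed.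

Lemma integral_off_QpX z s : (forall i, is_qp p (z i)) -> integral_off z s -> QpX z.
Proof.
move=> hz hs; split => //; apply: (sub_finite_set _ (finite_seq s)) => i /= zi.
by apply/negPn/negP => /hs.
Qed.

Lemma QpX0 : QpX (@vzero X).
Proof.
by apply: (@integral_off_QpX _ [::]) => i; [exact: is_qp0 | split; [exact: is_qp0|]].
Qed.

Lemma integral_off_vadd z w s :
  integral_off z s -> integral_off w s -> integral_off (vadd p z w) s.
Proof. by move=> hz hw i /[dup] /hz zi /hw wi; exact: in_Zp_add. Qed.

Lemma QpX_vadd z w : QpX z -> QpX w -> QpX (vadd p z w).
Proof.
move=> hz hw; have [s hs] := QpX_integral_off hz; have [s' hs'] := QpX_integral_off hw.
have o : integral_off (vadd p z w) (s ++ s').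
  by apply: integral_off_vadd; [exact: integral_off_catl | exact: integral_off_catr].
by apply: integral_off_QpX o => i; apply: is_qp_add => //; apply: QpX_is_qp.
Qed.

Lemma vaddC z w : vadd p z w = vadd p w z.
Proof. by apply/funext => i; rewrite /vadd qp_addC. Qed.

Lemma vaddA z w w' : vadd p z (vadd p w w') = vadd p (vadd p z w) w'.
Proof. by apply/funext => i; rewrite /vadd qp_addA. Qed.

Lemma vaddr0 z : QpX z -> vadd p z (@vzero X) = z.
Proof. by move=> hz; apply/funext => i; rewrite /vadd qp_addr0 //; exact: QpX_is_qp. Qed.

Lemma vadd0r z : QpX z -> vadd p (@vzero X) z = z.
Proof. by move=> hz; rewrite vaddC vaddr0. Qed.

Lemma pairing_finite z w s : integral_off z s -> integral_off w s ->
  pairing p z w = rmod (\sum_(i <- undup s) qp_mul p (z i) (w i) 0%N) 1.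
Proof.
move=> hz hw; rewrite /pairing (fsbigE (undup s)) ?undup_uniq //.
  by congr rmod; apply: eq_bigl => i; rewrite in_setT.
by move=> i _; rewrite mem_undup => /[dup] /hz zi /hw wi; exact: qp_mul0_Zp.
Qed.

Lemma pairingC z w : pairing p z w = pairing p w z.
Proof. by rewrite /pairing; congr rmod; apply: eq_fsbigr => i _; exact: qp_mul0C. Qed.

Lemma pairing_itv z w : 0 <= pairing p z w < 1.
Proof. exact: rmod_itv ltr01. Qed.

Lemma pairingr0 z : pairing p z (@vzero X) = 0.
Proof.
rewrite /pairing fsbig1 => [|i _]; apply: rmod_unique; rewrite ?lexx ?ltr01 ?cong_refl //.
by rewrite /vzero /qp0 mulr0 cong_refl.
Qed.

Lemma pairingD z w w' : QpX z -> QpX w -> QpX w' ->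
  cong 1 (pairing p z (vadd p w w')) (pairing p z w + pairing p z w').
Proof.
move=> hz hw hw'; have [sz oz] := QpX_integral_off hz.
have [sw ow] := QpX_integral_off hw; have [sw' ow'] := QpX_integral_off hw'.
set s := sz ++ sw ++ sw'.
have {}oz : integral_off z s by apply: integral_off_catl.
have {}ow : integral_off w s by apply/integral_off_catr/integral_off_catl.
have {}ow' : integral_off w' s by apply/integral_off_catr/integral_off_catr.
have ovw := integral_off_vadd ow ow'.
rewrite (pairing_finite oz ovw) (pairing_finite oz ow) (pairing_finite oz ow').
apply: cong_trans (cong_sym (rmod_cong _ (oner_neq0 _))) _.
apply: cong_trans _ (congD (rmod_cong _ (oner_neq0 _)) (rmod_cong _ (oner_neq0 _))).
rewrite -big_split; apply: cong_sum => i.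
by apply: qp_mul0D => //; apply: QpX_is_qp.
Qed.

Lemma pairing_vadd_eq0 z w w' : QpX z -> QpX w -> QpX w' ->
  pairing p z w = 0 -> pairing p z w' = 0 -> pairing p z (vadd p w w') = 0.
Proof.
move=> hz hw hw' e e'; have := pairingD hz hw hw'; rewrite e e' addr0.
by apply: cong_eq; rewrite ?pairing_itv ?lexx ?ltr01.
Qed.

Lemma perp_QpX S : perp p S `<=` QpX.
Proof. by move=> z []. Qed.

Lemma perpS S T : S `<=` T -> perp p T `<=` perp p S.
Proof. by move=> ST z [hz h]; split=> // w /ST; exact: h. Qed.

Lemma sub_perp_perp S : S `<=` QpX -> S `<=` perp p (perp p S).
Proof. by move=> SQ z Sz; split=> [|w [_ h]]; [exact: SQ | rewrite pairingC h]. Qed.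

Lemma perp0 S : perp p S (@vzero X).
Proof. by split=> [|w _]; [exact: QpX0 | rewrite pairingC pairingr0]. Qed.

Lemma perp_vadd S z w : S `<=` QpX -> perp p S z -> perp p S w -> perp p S (vadd p z w).
Proof.
move=> SQ [hz ez] [hw ew]; split=> [|u Su]; first exact: QpX_vadd.
rewrite pairingC; apply: pairing_vadd_eq0 => //; first exact: SQ.
  by rewrite pairingC; exact: ez.
by rewrite pairingC; exact: ew.
Qed.

Lemma Ybox_integral_off (P : seq X) z : Ybox p P z -> integral_off z P.
Proof. by case=> hz hP i /hP zi0; split. Qed.

Lemma Ybox_QpX (P : seq X) z : Ybox p P z -> QpX z.
Proof. by move=> hY; apply: (integral_off_QpX _ (Ybox_integral_off hY)); case: hY. Qed.

Lemma perp_tau_closed S : S `<=` QpX -> tau_closed p (perp p S).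
Proof.
move=> SQ; split; first exact: perp_QpX.
split=> [z [] //|P xi hYxi [[hxi nperp] _]].
have [w Sw nw] : exists2 w, S w & pairing p xi w <> 0.
  apply: contrapT => hn; apply: nperp; split=> // w Sw.
  by apply: contrapT => ne; apply: hn; exists w.
have hw := SQ _ Sw; have [sw ow] := QpX_integral_off hw.
set F := P ++ sw; set N := (\max_(i <- F) qp_den (w i))%N.
exists F, N => eta hYeta agree; split=> //; split; first exact: Ybox_QpX hYeta.
suff same : pairing p eta w = pairing p xi w by case=> _ /(_ w Sw); rewrite same.
have ow' : integral_off w F by apply: integral_off_catr.
have oxi : integral_off xi F by apply/integral_off_catl/Ybox_integral_off/hYxi.
have oeta : integral_off eta F by apply/integral_off_catl/Ybox_integral_off/hYeta.
rewrite (pairing_finite oxi ow') (pairing_finite oeta ow').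
congr rmod; apply: eq_big_seq => i; rewrite mem_undup => iF.
apply: (@qp_mul0_local _ _ _ _ _ N); rewrite ?agree //; try exact: QpX_is_qp.
- by case: hYeta.
- exact: leq_bigmax_seq.
Qed.

End Pairing.

(** * Extending characters to Q/Z *)

Section IntSubgroup.
Variable T : {pred int}.
Hypothesis T_zmod : zmod_closed T.
HB.instance Definition _ := GRing.isZmodClosed.Build int T T_zmod.

Lemma int_subgroup_generator (N : nat) : (0 < N)%N -> N%:Z \in T ->
  exists2 d : nat, (0 < d)%N /\ d%:Z \in T & forall b, b \in T -> (d %| b)%Z.
Proof.
move=> N0 TN; pose P d := (0 < d)%N && (d%:Z \in T).
have [d /andP[d0 Td] dmin] := ex_minnP (ex_intro P N (introT andP (conj N0 TN))).
exists d => // b Tb; apply/dvdz_mod0P/eqP; apply: contraT => r0.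
have d0' : d%:Z != 0 by rewrite eqz_nat -lt0n.
have Tr : (b %% d)%Z \in T by rewrite /modz rpredB // mulrC -mulrzz rpredMz.
have r_ge0 := modz_ge0 b d0'; have r_lt := ltz_mod b d0'.
have : (d <= `|(b %% d)%Z|)%N by apply: dmin; rewrite /P absz_gt0 r0 gez0_abs.
lia.
Qed.

End IntSubgroup.

Definition lincomb (V : zmodType) (f : nat -> V) (l : seq (nat * int)) : V :=
  \sum_(e <- l) f e.1 *~ e.2.

Definition indices_below (k : nat) (l : seq (nat * int)) := all (fun e => (e.1 < k)%N) l.

Definition lscale (q : int) (l : seq (nat * int)) := [seq (e.1, e.2 * q) | e <- l].

Section LinearCombination.
Variable V : zmodType.
Implicit Types (f : nat -> V) (l : seq (nat * int)).

Lemma lincomb_cat f l l' : lincomb f (l ++ l') = lincomb f l + lincomb f l'.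
Proof. exact: big_cat. Qed.

Lemma lincomb_scale f q l : lincomb f (lscale q l) = lincomb f l *~ q.
Proof. by rewrite /lincomb big_map mulrz_suml; apply: eq_bigr => e _; rewrite mulrzA. Qed.

Lemma lincomb_split f k l :
  lincomb f l = f k *~ (\sum_(e <- l | e.1 == k) e.2) + lincomb f [seq e <- l | e.1 != k].
Proof.
rewrite /lincomb (bigID (fun e => e.1 == k)) /= big_filter mulrz_sumr.
by congr (_ + _); apply: eq_bigr => e /eqP ->.
Qed.

Lemma eq_lincomb f f' l : (forall e, e \in l -> f e.1 = f' e.1) -> lincomb f l = lincomb f' l.
Proof. by move=> h; apply: eq_big_seq => e /h ->. Qed.

End LinearCombination.

Lemma lincomb_apply (T : Type) (V : zmodType) (f : nat -> T -> V) l x :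
  lincomb f l x = lincomb (f^~ x) l.
Proof.
rewrite /lincomb; elim: l => [|[i m] l IH]; rewrite ?big_nil // !big_cons addrfctE /= IH.
by case: m => m; rewrite ?NegzE ?mulrNz ?opprfctE -!pmulrn natmulfctE.
Qed.

Section CharacterExtension.
Variables (G : zmodType) (H : zmodClosed G) (g : nat -> G).
Hypothesis g_torsion : forall m, exists2 N, (0 < N)%N & g m *+ N \in H.
Implicit Types (c : nat -> rat) (l : seq (nat * int)).

(** [c] assigns values in Q/Z to the generators; [char_below k c] says that these
    values on [g i], [i < k], define a character of the group generated by [H] and
    these generators which is trivial on [H]. *)
Definition char_below k c := forall l, indices_below k l ->
  lincomb g l \in H -> lincomb c l \is a Num.int.

Lemma char_below_eq k c c' :
  (forall i, (i < k)%N -> c i = c' i) -> char_below k c -> char_below k c'.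
Proof.
move=> e hc l lk Hl; rewrite -(eq_lincomb (f := c)) ?hc // => x xl.
by apply: e; move/allP: lk; apply.
Qed.

Definition rel_coefs k : {pred int} :=
  [pred b | `[< exists2 l, indices_below k l & g k *~ b + lincomb g l \in H >]].

Lemma rel_coefs_zmod k : zmod_closed (rel_coefs k).
Proof.
split=> [|a b /asboolP[la lak Ha] /asboolP[lb lbk Hb]]; apply/asboolP.
  by exists [::]; rewrite // /lincomb big_nil mulr0z addr0 rpred0.
exists (la ++ lscale (-1) lb); first by rewrite /indices_below all_cat all_map; apply/andP.
by rewrite lincomb_cat lincomb_scale mulrN1z mulrzBr addrACA -opprD rpredB.
Qed.

Lemma rel_coefs_generator k : exists2 d : nat,
  (0 < d)%N /\ d%:Z \in rel_coefs k & forall b, b \in rel_coefs k -> (d %| b)%Z.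
Proof.
have [N N0 HN] := g_torsion k; apply: (int_subgroup_generator (rel_coefs_zmod k) N0).
by apply/asboolP; exists [::] => //; rewrite /lincomb big_nil addr0.
Qed.

(* Q/Z is divisible: if [d] generates [rel_coefs k] and [d g_k + l0] lies in [H],
   giving [g_k] the value [- c(l0) / d] is consistent. *)
Lemma char_below_extend k c : char_below k c -> exists v, char_below k.+1 [eta c with k |-> v].
Proof.
move=> hc; have [d [d0 /asboolP[l0 l0k Hl0]] dvdT] := rel_coefs_generator k.
exists (- lincomb c l0 / d%:R) => l lk Hl.
set b := \sum_(e <- l | e.1 == k) e.2; set lr := [seq e <- l | e.1 != k].
have lrk : indices_below k lr.
  apply/allP => e; rewrite mem_filter => /andP[ne /(allP lk)].
  by rewrite ltnS leq_eqVlt (negbTE ne).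
have Rb : b \in rel_coefs k by apply/asboolP; exists lr => //; rewrite -lincomb_split.
have bq := divzK (dvdT _ Rb); set q := (b %/ d)%Z in bq.
have : lincomb c (lr ++ lscale (- q) l0) \is a Num.int.
  apply: hc; first by rewrite /indices_below all_cat all_map; apply/andP.
  rewrite lincomb_cat lincomb_scale mulrNz.
  have -> : lincomb g lr - lincomb g l0 *~ q = lincomb g l - (g k *~ d + lincomb g l0) *~ q.
    rewrite (lincomb_split g k l) -/b -/lr -bq mulrzDl -mulrzA [(q * _)]mulrC.
    by rewrite opprD addrACA subrr add0r.
  by rewrite rpredB ?rpredMz.
suff -> : lincomb [eta c with k |-> - lincomb c l0 / d%:R] l = lincomb c (lr ++ lscale (- q) l0).
  by [].
rewrite (lincomb_split _ k) /= eqxx (eq_lincomb (f' := c)) => [|e]; last first.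
  by rewrite mem_filter /= => /andP[/negbTE ->].
rewrite lincomb_cat lincomb_scale -/b -bq -(mulrzr (- _ / _)) -(mulrzr (lincomb c l0)).
by rewrite intrM intrN; field; rewrite pnatr_eq0 -lt0n.
Qed.

Lemma char_extension k c : char_below k c ->
  exists2 c', (forall i, (i < k)%N -> c' i = c i)
            & forall l, lincomb g l \in H -> lincomb c' l \is a Num.int.
Proof.
move=> hc.
have /choice[ext hext] : forall kc : nat * (nat -> rat), exists v,
    char_below kc.1 kc.2 -> char_below kc.1.+1 [eta kc.2 with kc.1 |-> v].
  move=> [k' c'] /=; have [/char_below_extend[v hv]|nc] := pselect (char_below k' c').
    by exists v.
  by exists 0 => /nc.
pose fix it m := if m is m'.+1 then [eta it m' with (k + m')%N |-> ext (k + m', it m')] else c.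
have it_char m : char_below (k + m) (it m).
  elim: m => [|m IH]; first by rewrite addn0.
  by rewrite addnS; exact: (hext (k + m, it m) IH).
have it_stable m m' i : (i < k + m)%N -> (m <= m')%N -> it m' i = it m i.
  move=> im; elim: m' => [|m' IH]; first by rewrite leqn0 => /eqP ->.
  rewrite leq_eqVlt => /orP[/eqP -> //|]; rewrite ltnS => mm'; rewrite -(IH mm') /=.
  by rewrite ifN_eq //; apply: contraTneq im => ->; rewrite -leqNgt leq_add2l.
exists (fun i => it i.+1 i) => [i ik|l Hl]; first by rewrite (it_stable 0%N) ?addn0.
pose m := (\max_(e <- l) e.1.+1)%N.
have /(_ l) : char_below (k + m) (fun i => it i.+1 i).
  apply: char_below_eq (it_char m) => i im; have [mi|/ltnW im'] := leqP m i.+1.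
    by rewrite (it_stable m).
  by rewrite (it_stable i.+1) // ltn_addl.
apply=> //; apply/allP => e el; apply: ltn_addl.
exact: leq_bigmax_seq el _.
Qed.

End CharacterExtension.

(** * Separating a point from a closed submonoid *)

Section Separation.
Variable p : nat.
Hypothesis p_prime : prime p.
Local Notation P k := ((p ^ k)%:R : rat).
Variable X : countType.
Local Notation QpX := (@QpX p X).
Variable S : set (X -> qp_raw).
Hypotheses (S_QpX : S `<=` QpX) (S0 : S (@vzero X)).
Hypothesis S_vadd : forall s t, S s -> S t -> S (vadd p s t).
Variables (xi : X -> qp_raw) (B F : seq X) (n : nat).
Hypothesis xi_box : Ybox p B xi.
Hypothesis box_avoids_S : forall z, Ybox p B z -> (forall i, i \in F -> z i n = xi i n) -> ~ S z.
Implicit Types (z s : X -> qp_raw) (f h : X -> rat) (j : X) (t : nat).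

Definition level j : nat := if j \in F then n else 0.

(** [residue z] represents the image of [z] in the discrete torsion group
    ⊕_j Q_p / p^(level j) Z_p; there [S] becomes the subgroup [Sres] and, as [xi]
    has a neighbourhood missing [S], the image of [xi] lies outside it. *)
Definition residue z : X -> rat := fun j => z j (level j).

Definition congv f h := forall j, cong (P (level j)) (f j) (h j).

Definition Sres : {pred X -> rat} := [pred f | `[< exists2 s, S s & congv f (residue s) >]].

Lemma congv_sym f h : congv f h -> congv h f.
Proof. by move=> e j; apply: cong_sym. Qed.

Lemma congv_trans f h k : congv f h -> congv h k -> congv f k.
Proof. by move=> e e' j; apply: cong_trans (e j) (e' j). Qed.

Lemma congv_natmul m f h : congv f h -> congv (f *+ m) (h *+ m).
Proof.
move=> e j; rewrite !natmulfctE -[f j *+ m]mulr_natl -[h j *+ m]mulr_natl.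
exact/congMl/e/natr_int.
Qed.

Lemma Sres_congv f h : congv f h -> f \in Sres -> h \in Sres.
Proof.
by move=> e /asboolP[s Ss es]; apply/asboolP; exists s => //; apply: congv_trans (congv_sym e) es.
Qed.

Lemma Sres_residue s : S s -> residue s \in Sres.
Proof. by move=> Ss; apply/asboolP; exists s => // j; apply: cong_refl. Qed.

Lemma Sres0 : 0 \in Sres.
Proof. by apply: Sres_congv (Sres_residue S0) => j; apply: cong_refl. Qed.

Lemma SresD f h : f \in Sres -> h \in Sres -> f + h \in Sres.
Proof.
move=> /asboolP[s Ss es] /asboolP[t St et]; apply/asboolP; exists (vadd p s t); first exact: S_vadd.
move=> j; apply: cong_trans (congD (es j) (et j)) _.
exact/cong_sym/qp_add_cong.
Qed.

Lemma Sres_natmul f m : f \in Sres -> f *+ m \in Sres.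
Proof. by move=> hf; elim: m => [|m IH]; rewrite ?mulr0n ?Sres0 // mulrS SresD. Qed.

Lemma residue_torsion z : QpX z -> exists2 N, (0 < N)%N & congv (residue z *+ N) 0.
Proof.
move=> hz; have [s zs] := QpX_integral_off hz.
pose N := (p ^ (n + \max_(j <- s ++ F) qp_den (z j)))%N.
exists N; first by rewrite expn_gt0 prime_gt0.
move=> j; rewrite /cong natmulfctE /= subr0 -[_ *+ N]mulr_natr /residue.
have [jsF|jsF] := boolP (j \in s ++ F); last first.
  rewrite mem_cat negb_or in jsF; case/andP: jsF => /zs[_ z0] jF.
  by rewrite /level (negbTE jF) z0 !mul0r.
have lev : (level j <= n)%N by rewrite /level; case: ifP.
set M := (\max_(j <- s ++ F) qp_den (z j))%N in N *; rewrite -mulrA.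
have -> : N%:R / P (level j) = P M * P (n - level j).
  rewrite /N -{1}(subnK lev) -addnA [(level j + M)%N]addnC addnA !ppowD mulfK ?ppow_neq0 //.
  by rewrite mulrC.
rewrite (@qp_digit_mul_int p p_prime _ _ M) //; first exact: QpX_is_qp.
  exact: leq_bigmax_seq.
by rewrite mulrAC mulfV ?ppow_neq0 // mul1r natr_int.
Qed.

Lemma SresN f : f \in Sres -> - f \in Sres.
Proof.
move=> hf; have /asboolP[s Ss es] := hf; have [N N0 tN] := residue_torsion (S_QpX Ss).
apply: Sres_congv (Sres_natmul N.-1 hf) => j.
have := congv_trans (congv_natmul N es) tN j.
by rewrite /cong !natmulfctE opprfctE /= opprK subr0 -mulrSr prednK.
Qed.

Lemma Sres_zmod : zmod_closed Sres.
Proof. by split=> [|f h hf hh]; [exact: Sres0 | rewrite SresD ?SresN]. Qed.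

HB.instance Definition _ := GRing.isZmodClosed.Build (X -> rat) Sres Sres_zmod.

Lemma residue_xi_notin_Sres : residue xi \notin Sres.
Proof.
apply/negP => /asboolP[s Ss es]; have hs := S_QpX Ss; have hxi := Ybox_QpX xi_box.
have same j : s j (level j) = xi j (level j).
  by apply: cong_eq (cong_sym (es j)); apply: qp_itv => //; exact: QpX_is_qp.
have same0 j : s j 0%N = xi j 0%N.
  have cs := qp_chain p_prime (QpX_is_qp j hs) (leq0n (level j)).
  have cxi := qp_chain p_prime (QpX_is_qp j hxi) (leq0n (level j)).
  apply: (@cong_eq _ (P 0)); [exact/qp_itv/QpX_is_qp | exact/qp_itv/QpX_is_qp |].
  by apply: cong_trans (cong_sym cs) _; rewrite same.
apply: (box_avoids_S (z := s)) => //.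
  by split=> [i|i iB]; [exact: QpX_is_qp | rewrite same0; case: xi_box => _; apply].
by move=> i iF; have := same i; rewrite /level iF.
Qed.

(** Generators of that group: the residue of [xi], then p^-t e_j for all pairs
    (j, t), enumerated through [pickle]. *)
Definition gen (m : nat) : X -> rat :=
  if m is m'.+1 then
    if @unpickle (X * nat)%type m' is Some (j, t) then [eta \0 with j |-> (P t)^-1] else 0
  else residue xi.

Arguments gen : simpl never.

Lemma gen_pickle (j : X) (t : nat) : gen (pickle (j, t)).+1 = [eta \0 with j |-> (P t)^-1].
Proof. by rewrite /gen pickleK. Qed.

Lemma gen_torsion m : exists2 N, (0 < N)%N & gen m *+ N \in Sres.
Proof.
case: m => [|m]; rewrite /gen.
  have [N N0 tN] := residue_torsion (Ybox_QpX xi_box).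
  by exists N => //; apply: Sres_congv Sres0; apply: congv_sym.
case: (@unpickle (X * nat)%type m) => [[j t]|]; last by exists 1%N; rewrite ?mul0rn ?Sres0.
exists (p ^ (t + n))%N; first by rewrite expn_gt0 prime_gt0.
apply: Sres_congv Sres0 => i; rewrite /cong natmulfctE /= sub0r mulNr rpredN.
rewrite -[_ *+ _]mulr_natr.
case: eqP => _; last by rewrite mul0r mul0r rpred0.
have lev : (level i <= n)%N by rewrite /level; case: ifP.
by rewrite ppowD mulrA mulVf ?ppow_neq0 // mul1r -(subnK lev) ppowD mulfK ?ppow_neq0 ?natr_int.
Qed.

Lemma initial_char : exists2 d : nat, (1 < d)%N & char_below Sres gen 1 (fun=> d%:R^-1).
Proof.
pose T := [pred b : int | residue xi *~ b \in Sres].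
have T_zmod : zmod_closed T.
  split=> [|a b]; first by rewrite [_ \in T]inE mulr0z rpred0.
  by rewrite ![_ \in T]inE mulrzBr; exact: rpredB.
have [N N0 tN] := gen_torsion 0.
have [d [d0 Td] dvdT] := int_subgroup_generator T_zmod N0 tN.
exists d => [|l l1 Hl].
  rewrite ltn_neqAle d0 andbT; apply: contraNneq residue_xi_notin_Sres => d1.
  by move: Td; rewrite -d1 inE mulr1z.
have split0 (V : zmodType) (f : nat -> V) :
    lincomb f l = f 0%N *~ (\sum_(e <- l | e.1 == 0%N) e.2).
  rewrite (lincomb_split _ 0) (_ : [seq e <- l | _] = [::]) /lincomb ?big_nil ?addr0 //.
  rewrite (eq_in_filter (a2 := pred0)) ?filter_pred0 // => e /(allP l1).
  by rewrite ltnS leqn0 => /eqP ->.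
rewrite split0 /=.
have /dvdT/divzK <- : \sum_(e <- l | e.1 == 0%N) e.2 \in T.
  by rewrite [_ \in T]inE -[residue xi]/(gen 0) -split0.
by rewrite -mulrzr intrM mulrCA mulVf ?mulr1 ?intr_int // pnatr_eq0 -lt0n.
Qed.

Section DualVector.
Variable c : nat -> rat.
Hypothesis c_char : forall l, lincomb gen l \in Sres -> lincomb c l \is a Num.int.

Definition coef (j : X) (t : nat) : rat := c (pickle (j, t)).+1.

Lemma coef_step j t : coef j t - p%:R * coef j t.+1 \is a Num.int.
Proof.
set l := [:: ((pickle (j, t)).+1, 1); ((pickle (j, t.+1)).+1, - p%:Z)].
have /c_char : lincomb gen l \in Sres.
  rewrite (_ : lincomb gen l = 0) ?rpred0 //; apply/funext => i; rewrite -[RHS]/(0 : rat).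
  rewrite lincomb_apply /lincomb !big_cons big_nil /= !gen_pickle /=.
  case: eqP => _; last by rewrite !mul0rz !addr0.
  rewrite addr0 mulr1z -mulrzr intrN expnS natrM invfM; field.
  by apply/andP; split; [exact: ppow_neq0 | exact: (ppow_neq0 p_prime 1)].
by rewrite /lincomb !big_cons big_nil addr0 mulr1z -mulrzr intrN /coef mulrN mulrC.
Qed.

Lemma coef_int j t : P (t + level j) * coef j t \is a Num.int.
Proof.
set l := [:: ((pickle (j, t)).+1, (p ^ (t + level j))%N%:Z)].
have /c_char : lincomb gen l \in Sres.
  apply: Sres_congv Sres0 => i; rewrite lincomb_apply /lincomb big_cons big_nil addr0.
  rewrite gen_pickle /cong /= sub0r mulNr rpredN -pmulrn -[(if _ then _ else _) *+ _]mulr_natr.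
  case: eqP => [->|_]; last by rewrite !mul0r rpred0.
  rewrite ppowD (_ : _ / _ = 1) ?rpred1 //; field.
  by rewrite !(ppow_neq0 p_prime).
by rewrite /lincomb big_cons big_nil addr0 -pmulrn -[c _ *+ _]mulr_natr mulrC.
Qed.

(** The vector representing the character [c]: its value on p^-t e_j is
    [coef j t], and the k-th digit of [dual j] is p^k coef j k modulo p^k. *)
Definition dual j : qp_raw := fun k => rmod (P k * coef j k) (P k).

Lemma dual_cong j k : cong (P k) (P k * coef j k) (dual j k).
Proof. exact/rmod_cong/ppow_neq0. Qed.

Lemma dual_int j k : P (level j) * dual j k \is a Num.int.
Proof.
have := dual_cong j k; rewrite /cong => h.
rewrite (_ : _ * _ = P (k + level j) * coef j k
                     - P (level j) * ((P k * coef j k - dual j k) / P k) * P k).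
  exact: rpredB (coef_int j k) (rpredM (rpredM (natr_int _ _) h) (natr_int _ _)).
by rewrite ppowD; field; rewrite ppow_neq0.
Qed.

Lemma is_qp_dual j : is_qp p (dual j).
Proof.
move=> k; have /andP[d0 dlt] := rmod_itv (P k * coef j k) (ppow_gt0 p_prime k).
split=> //; first by exists (level j); exact: dual_int.
apply: cong_trans (cong_ppow_le p_prime (leqnSn k) (cong_sym (dual_cong j k.+1))) _.
apply: cong_trans _ (dual_cong j k).
rewrite /cong (_ : _ / _ = - (coef j k - p%:R * coef j k.+1)) ?rpredN ?coef_step //.
by rewrite expnS natrM; field; rewrite ppow_neq0.
Qed.

Lemma dual_integral_off : integral_off p dual F.
Proof.
move=> j jF; split; first exact: is_qp_dual.
have := coef_int j 0; rewrite /level (negbTE jF) expn0 mul1r => cZ.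
rewrite /dual expn0 mul1r; apply: rmod_unique; first by rewrite lexx ltr01.
by rewrite cong1E subr0.
Qed.

Lemma QpX_dual : QpX dual.
Proof. exact: integral_off_QpX is_qp_dual dual_integral_off. Qed.

Lemma pairing_term z i : is_qp p (z i) -> exists tb : nat * int,
  residue z i = tb.2%:~R / P tb.1 /\ cong 1 (qp_mul p (z i) (dual i) 0) (coef i tb.1 *~ tb.2).
Proof.
move=> hzi; have [[t /intrP[b hb]] _ _ _] := hzi (level i).
have zb : residue z i = b%:~R / P t by rewrite /residue -hb; field; rewrite ppow_neq0.
exists (t, b); split=> //=.
set K := (qp_den (z i) + qp_den (dual i) + t + level i)%N.
have /(qp_mul0_cong p_prime hzi (is_qp_dual i)) c1 : (qp_den (z i) + qp_den (dual i) <= K)%N.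
  by rewrite /K; lia.
apply: cong_trans c1 _; rewrite cong1E.
rewrite (_ : _ - _ = P (level i) * dual i K * ((z i K - z i (level i)) / P (level i))
                    + b%:~R * ((dual i K - dual i t) / P t)
                    - b%:~R * ((P t * coef i t - dual i t) / P t)); last first.
  by rewrite -mulrzl; move: zb; rewrite /residue => ->; field; rewrite !ppow_neq0.
apply: rpredB; first apply: rpredD.
- apply: rpredM; first exact: dual_int.
  by apply: qp_chain => //; rewrite /K; lia.
- apply: rpredM; first exact: intr_int.
  by apply: qp_chain => //; [exact: is_qp_dual | rewrite /K; lia].
- by apply: rpredM; [exact: intr_int | exact: dual_cong].
Qed.

Lemma pairing_dual z : QpX z ->
  exists l, lincomb gen l = residue z /\ cong 1 (pairing p z dual) (lincomb c l).
Proof.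
move=> hz; have [s zs] := QpX_integral_off hz.
have /choice[tb htb] := fun i => pairing_term (QpX_is_qp i hz).
set L := undup (s ++ F).
exists [seq ((pickle (i, (tb i).1)).+1, (tb i).2) | i <- L]; split.
  apply/funext => j; rewrite lincomb_apply /lincomb big_map.
  under eq_bigr do rewrite gen_pickle /=.
  have [jL|jL] := boolP (j \in L).
    rewrite (bigD1_seq j) ?undup_uniq //= eqxx big1 => [|i]; last first.
      by rewrite eq_sym => /negbTE ->; rewrite mul0rz.
    by rewrite addr0 (proj1 (htb j)) -mulrzl mulrC.
  rewrite big1_seq => [|i /andP[_ iL]]; last by rewrite ifN_eq ?mul0rz // eq_sym (memPn jL).
  move: jL; rewrite mem_undup mem_cat negb_or => /andP[/zs[_ z0] jF].
  by rewrite /residue /level (negbTE jF) z0.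
have oz : integral_off p z (s ++ F) by apply: integral_off_catl.
have od : integral_off p dual (s ++ F) by apply/integral_off_catr/dual_integral_off.
rewrite (pairing_finite p_prime oz od) -/L.
apply: cong_trans (cong_sym (rmod_cong _ (oner_neq0 _))) _.
by rewrite /lincomb big_map; apply: cong_sum => i; exact: (proj2 (htb i)).
Qed.

Lemma dual_perp s : S s -> pairing p s dual = 0.
Proof.
move=> Ss; have [l [gl cl]] := pairing_dual (S_QpX Ss).
have /c_char lZ : lincomb gen l \in Sres by rewrite gl Sres_residue.
apply: cong_eq (pairing_itv _ _ _) _ (cong_trans cl _); first by rewrite lexx ltr01.
by rewrite cong1E subr0.
Qed.

Lemma pairing_xi_dual : cong 1 (pairing p xi dual) (c 0%N).
Proof.
have [l [gl cl]] := pairing_dual (Ybox_QpX xi_box); apply: cong_trans cl _.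
have /c_char : lincomb gen ((0%N, -1) :: l) \in Sres.
  by rewrite /lincomb big_cons -/(lincomb gen l) gl mulrN1z addNr rpred0.
by rewrite /lincomb big_cons -/(lincomb c l) mulrN1z addrC cong1E.
Qed.

End DualVector.

Lemma separating_dual : exists2 eta, perp p S eta & pairing p xi eta <> 0.
Proof.
have [d d1 hd] := initial_char.
have [c c0 hc] := char_extension gen_torsion hd.
exists (dual c); first by split=> [|s Ss]; [exact: QpX_dual | rewrite pairingC dual_perp].
move=> e; have := pairing_xi_dual hc; rewrite e c0 // => /cong_sym /(cong_eq _ _).
have d0 : 0 < d%:R :> rat by rewrite ltr0n ltnW.
rewrite lexx ltr01 invr_ge0 ltW //= invf_lt1 // ltr1n d1 => /(_ isT isT) /eqP.
by rewrite invr_eq0 gt_eqF.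
Qed.

End Separation.

(** * Duality *)

Section Duality.
Variable p : nat.
Hypothesis p_prime : prime p.
Variable X : countType.
Local Notation QpX := (@QpX p X).
Implicit Types (S K L : set (X -> qp_raw)) (xi a b c d : X -> qp_raw).

Definition vadd_closed S := forall s t, S s -> S t -> S (vadd p s t).

Lemma separation S xi : S `<=` QpX -> S (@vzero X) -> vadd_closed S ->
  QpX xi -> ~ tau_closure p S xi -> exists2 eta, perp p S eta & pairing p xi eta <> 0.
Proof.
move=> SQ S0 Sadd hxi /not_andP[//|/existsNP[C /not_implyP[[_ [_ C_open]]]]].
move=> /not_implyP[SC nCxi].
have [B oB] := QpX_integral_off hxi.
have xi_box : Ybox p B xi by split=> [i|j /oB[]//]; exact: QpX_is_qp.
have [|F [n avoid]] := C_open B xi xi_box; first by split.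
apply: (separating_dual p_prime SQ S0 Sadd xi_box (F := F) (n := n)) => z hz agree Sz.
by have [[_ /(_ (SC _ Sz))]] := avoid z hz agree.
Qed.

Lemma vaddACA a b c d : vadd p (vadd p a b) (vadd p c d) = vadd p (vadd p a c) (vadd p b d).
Proof. by rewrite -!(vaddA p_prime) (vaddA p_prime b) (vaddC _ b) -(vaddA p_prime). Qed.

Lemma sub_msuml K L : K `<=` QpX -> L (@vzero X) -> K `<=` msum p K L.
Proof. by move=> KQ L0 k Kk; exists k, (@vzero X); rewrite vaddr0 //; exact: KQ. Qed.

Lemma sub_msumr K L : L `<=` QpX -> K (@vzero X) -> L `<=` msum p K L.
Proof. by move=> LQ K0 l Ll; exists (@vzero X), l; rewrite vadd0r //; exact: LQ. Qed.

Lemma perp_perp K : K `<=` QpX -> K (@vzero X) -> vadd_closed K -> tau_closed p K ->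
  K = perp p (perp p K).
Proof.
move=> KQ K0 Kadd Kc; apply/seteqP; split; first exact: sub_perp_perp.
move=> xi [hxi xi_pp]; apply: contrapT => nKxi.
have ncl : ~ tau_closure p K xi by case=> _ /(_ K Kc (@subset_refl _ K)).
have [eta Keta] := separation KQ K0 Kadd hxi ncl; apply.
exact: xi_pp.
Qed.

Lemma perp_msum K L : K `<=` QpX -> L `<=` QpX -> K (@vzero X) -> L (@vzero X) ->
  perp p (msum p K L) = perp p K `&` perp p L.
Proof.
move=> KQ LQ K0 L0; apply/seteqP; split=> [xi h|xi [[hxi hK] [_ hL]]].
  by split; apply: perpS h; [exact: sub_msuml | exact: sub_msumr].
split=> // _ [k [l [Kk Ll ->]]].
by apply: (pairing_vadd_eq0 p_prime) => //; [exact: KQ | exact: LQ | exact: hK | exact: hL].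
Qed.

Lemma perp_cap K L :
  K `<=` QpX -> K (@vzero X) -> vadd_closed K -> tau_closed p K ->
  L `<=` QpX -> L (@vzero X) -> vadd_closed L -> tau_closed p L ->
  perp p (K `&` L) = tau_closure p (msum p (perp p K) (perp p L)).
Proof.
move=> KQ K0 Kadd Kc LQ L0 Ladd Lc.
have KLQ : K `&` L `<=` QpX by move=> z [/KQ].
set S := msum p (perp p K) (perp p L).
have S_perp : S `<=` perp p (K `&` L).
  move=> _ [a [b [Ka Lb ->]]]; apply: perp_vadd => //.
    by apply: perpS Ka => z [].
  by apply: perpS Lb => z [].
apply/seteqP; split=> [xi [hxi xi_perp]|xi [_]]; last first.
  by apply; [exact: perp_tau_closed | exact: S_perp].
have SQ : S `<=` QpX by move=> z /S_perp [].
have S0 : S (@vzero X) by apply: sub_msuml; [exact: perp_QpX | exact: perp0 | exact: perp0].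
have Sadd : vadd_closed S.
  move=> _ _ [a [b [Ka Lb ->]]] [c [d [Kc' Ld ->]]]; rewrite vaddACA.
  by exists (vadd p a c), (vadd p b d); split=> //; apply: perp_vadd.
apply: contrapT => ncl; have [eta eta_perp] := separation SQ S0 Sadd hxi ncl.
apply; apply: xi_perp.
split; [rewrite (perp_perp KQ K0 Kadd Kc) | rewrite (perp_perp LQ L0 Ladd Lc)].
  by apply: perpS eta_perp; apply: sub_msuml; [exact: perp_QpX | exact: perp0].
by apply: perpS eta_perp; apply: sub_msumr; [exact: perp_QpX | exact: perp0].
Qed.

End Duality.

Unset Implicit Arguments.

Theorem lemma2p8 (p : nat) (X : countType) (K L : set (X -> qp_raw)) :
  prime p ->
  is_Zp_submodule p K -> tau_closed p K ->
  is_Zp_submodule p L -> tau_closed p L ->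
  [/\ K = perp p (perp p K),
      (K `<=` L -> perp p L `<=` perp p K),
      perp p (msum p K L) = perp p K `&` perp p L
    & perp p (K `&` L) = tau_closure p (msum p (perp p K) (perp p L))].
Proof.
move=> p_prime [KQ K0 Kadd _] Kc [LQ L0 Ladd _] Lc; split.
- exact: perp_perp.
- exact: perpS.
- exact: perp_msum.
- exact: perp_cap.
Qed.
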